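(* Let $K=2$ and suppose that for every horizon $T$ (a multiple of $100$) a valid pair $(\eta,\gamma)=(\eta_T,\gamma_T)$ in the non-trivial regime is chosen. Then there exists $T_0$ such that for all $T\ge T_0$, WSU-UX run on the two-phase loss sequence satisfies $\mathbb{E}[\pi_{t,2}]\le\frac14$ for every round $t$ with $T_1+T_2+T_3<t\le T$.
   Context: WSU-UX. Fix integers $K\ge 2$ and $T\ge 1$ and hyperparameters $\eta,\gamma$. The pair $(\eta,\gamma)$ is called valid if $\eta,\gamma\in(0,1/2)$ and $\eta K/\gamma\le 1/2$. Given a fixed loss sequence $\ell_t\in[0,1]^K$, WSU-UX sets $\pi_{1,i}=1/K$ and in each round $t$: forms $\tilde\pi_{t,i}=(1-\gamma)\pi_{t,i}+\gamma/K$; draws $I_t$ with $\Pr(I_t=i\mid\mathcal F_{t-1})=\tilde\pi_{t,i}$; sets $\hat\ell_{t,i}=\ell_{t,i}\mathbf 1[I_t=i]/\tilde\pi_{t,i}$; and updates $\pi_{t+1,i}=\pi_{t,i}\bigl(1-\eta(\hat\ell_{t,i}-\sum_{j}\pi_{t,j}\hat\ell_{t,j})\bigr)$; $\mathcal F_t$ is the history generated by $I_1,\dots,I_t$. Non-trivial regime: $\eta\ge T^{-2/3}$ and $\gamma\le T^{-1/3}$. Two-phase loss sequence ($K=2$, $T$ a multiple of $100$): with $T_1=\frac{T}{100}$, $\ell_{t,1}=1,\ell_{t,2}=0$ for $1\le t\le T_1$ and $\ell_{t,1}=0,\ell_{t,2}=1$ for $T_1<t\le T$. Further $T_2=\frac{2}{10}T$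 and $T_3=\frac{1}{10}T$. *)

From mathcomp Require Import all_boot all_order all_algebra.
From mathcomp Require Import reals exp.
Set Implicit Arguments. Unset Strict Implicit. Unset Printing Implicit Defensive.
Import Order.TTheory GRing.Theory Num.Theory.
Local Open Scope ring_scope.

Section WSU.
Variables (R : realType) (K : nat).

(* Arms are indexed by 'I_K (arm i of the paper is index i-1). *)

Definition tpi (gam : R) (p : 'I_K -> R) (j : 'I_K) : R :=
  (1 - gam) * p j + gam / K%:R.

Definition lhat (gam : R) (ell : 'I_K -> R) (p : 'I_K -> R) (i j : 'I_K) : R :=
  if i == j then ell j / tpi gam p j else 0.

Definition wsu_step (eta gam : R) (ell : 'I_K -> R) (p : 'I_K -> R) (i : 'I_K)
  : 'I_K -> R :=
  fun j => p j * (1 - eta * (lhat gam ell p i j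
                              - \sum_(k < K) p k * lhat gam ell p i k)).

Definition unif : 'I_K -> R := fun _ => 1 / K%:R.

Fixpoint wsu_run (eta gam : R) (loss : nat -> 'I_K -> R) (t : nat)
    (p : 'I_K -> R) (h : seq 'I_K) : 'I_K -> R :=
  match h with
  | [::] => p
  | i :: h' => wsu_run eta gam loss t.+1 (wsu_step eta gam (loss t) p i) h'
  end.

Fixpoint wsu_prob (eta gam : R) (loss : nat -> 'I_K -> R) (t : nat)
    (p : 'I_K -> R) (h : seq 'I_K) : R :=
  match h with
  | [::] => 1
  | i :: h' => tpi gam p i *
               wsu_prob eta gam loss t.+1 (wsu_step eta gam (loss t) p i) h'
  end.

(* E[pi_{t,j}] for t >= 1: pi_t is determined by I_1..I_{t-1};
   sum over all histories of length t-1 weighted by their probability. *)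
Definition expected_pi (eta gam : R) (loss : nat -> 'I_K -> R) (t : nat)
    (j : 'I_K) : R :=
  \sum_(h : (t.-1).-tuple 'I_K)
     wsu_prob eta gam loss 1 unif h * wsu_run eta gam loss 1 unif h j.

Definition valid_params (eta gam : R) : Prop :=
  0 < eta < 1/2 /\ 0 < gam < 1/2 /\ eta * K%:R / gam <= 1/2.

End WSU.

Definition nontrivial_regime (R : realType) (T : nat) (eta gam : R) : Prop :=
  powR (T%:R) (- (2 / 3)) <= eta /\ gam <= powR (T%:R) (- (1 / 3)).

(* two-phase loss sequence for K = 2, T_1 = T/100:
   rounds 1..T_1: l = (1,0); rounds T_1 < t <= T: l = (0,1).
   Index ord0 is arm 1, index 1 is arm 2. *)
Definition two_phase_loss (R : realType) (T : nat) (t : nat) (i : 'I_2) : R :=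
  if (t <= T %/ 100)%N then (if i == ord0 then 1 else 0)
  else (if i == ord0 then 0 else 1).

Definition arm2 : 'I_2 := @Ordinal 2 1 isT.

From mathcomp Require Import all_boot all_order all_algebra.
From mathcomp Require Import reals exp sequences.
From mathcomp Require Import ring lra zify.
Import Order.TTheory GRing.Theory Num.Theory.
Set Implicit Arguments. Unset Strict Implicit. Unset Printing Implicit Defensive.
Local Open Scope ring_scope.

(* The potential is the odds pi_2 / pi_1 >= pi_2.  Because every arm is drawn with
   probability at least gamma/2 >= 2 eta, one round of WSU-UX multiplies the
   expected odds by at most 1 + 2 eta while arm 1 is the lossy arm, and by at most
   1 - 2 eta / 3 once arm 2 is.  Hence E[pi_{t,2}] <= (1 + 2 eta)^T_1
   (1 - 2 eta / 3)^(t - 1 - T_1), and t - 1 - T_1 >= 30 T_1 together with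
   eta T_1 >= T^(1/3) / 100 >= 1/5 (for T >= 8000) bounds this by
   exp (-18 eta T_1) <= exp (-18/5) < 1/4. *)

Section WsuStep.
Variables (R : realType) (K : nat) (eta gam : R) (ell p : 'I_K -> R) (i : 'I_K).

Lemma sum_mul_lhat : \sum_k p k * lhat gam ell p i k = p i * (ell i / tpi gam p i).
Proof.
rewrite (bigD1 i) //= big1 => [|k nki]; first by rewrite /lhat eqxx addr0.
by rewrite /lhat eq_sym (negbTE nki) mulr0.
Qed.

Lemma wsu_step_drawn :
  wsu_step eta gam ell p i i = p i * (1 - eta * (ell i / tpi gam p i) * (1 - p i)).
Proof. by rewrite /wsu_step sum_mul_lhat /lhat eqxx; congr (_ * _); ring. Qed.

Lemma wsu_step_other j : j != i ->
  wsu_step eta gam ell p i j = p j * (1 + eta * (ell i / tpi gam p i) * p i).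
Proof.
by move=> nji; rewrite /wsu_step sum_mul_lhat /lhat eq_sym (negbTE nji); congr (_ * _); ring.
Qed.

Lemma wsu_step_zero_loss : ell i = 0 -> wsu_step eta gam ell p i =1 p.
Proof.
move=> ell0 j; rewrite /wsu_step sum_mul_lhat ell0 mul0r mulr0.
by rewrite /lhat; case: eqP => [<-|_]; rewrite ?ell0 ?mul0r subr0 mulr0 subr0 mulr1.
Qed.

Lemma sum_wsu_step : \sum_j p j = 1 -> \sum_j wsu_step eta gam ell p i j = 1.
Proof.
move=> p1; rewrite /wsu_step.
under eq_bigr do rewrite mulrBr mulr1 mulrCA mulrBr.
rewrite sumrB p1 -mulr_sumr sumrB -mulr_suml p1 mul1r -/(lhat gam ell p i).
by rewrite subrr mulr0 subr0.
Qed.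

End WsuStep.

Section InteriorDist.
Variables (R : realType) (K : nat).

Definition interior_dist (p : 'I_K -> R) : Prop :=
  (forall j, 0 < p j) /\ \sum_j p j = 1.

Lemma tpi_ge (gam : R) (p : 'I_K -> R) j :
  0 <= gam <= 1 -> 0 <= p j -> gam / K%:R <= tpi gam p j.
Proof. by move=> /andP[? ?] ?; rewrite /tpi lerDr mulr_ge0 // subr_ge0. Qed.

Lemma sum_tpi (gam : R) (p : 'I_K -> R) :
  (0 < K)%N -> \sum_j p j = 1 -> \sum_j tpi gam p j = 1.
Proof.
move=> K_gt0 p1; rewrite big_split /= -mulr_sumr p1 sumr_const card_ord.
by rewrite -[X in _ + X]mulr_natr divfK ?pnatr_eq0 -?lt0n //; ring.
Qed.

Lemma interior_wsu_step (eta gam : R) (ell p : 'I_K -> R) i :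
  0 <= eta -> 0 < gam <= 1 -> eta * K%:R < gam -> (forall j, 0 <= ell j <= 1) ->
  interior_dist p -> interior_dist (wsu_step eta gam ell p i).
Proof.
move=> eta_ge0 /andP[gam_gt0 gam_le1] eta_small ell01 pI.
have [p_gt0 p1] := pI.
split; last exact: sum_wsu_step.
have K_gt0 : (0 < K%:R :> R) by rewrite ltr0n; case: (K) i => [[]|].
set u := tpi gam p i.
have u_gt : eta < u.
  have u_ge : gam / K%:R <= u by apply: tpi_ge; [rewrite ltW | exact: ltW].
  by apply: lt_le_trans u_ge; rewrite ltr_pdivlMr.
have u_gt0 : 0 < u by apply: le_lt_trans u_gt.
have [ell_ge0 ell_le1] := andP (ell01 i).
have rate_ge0 : 0 <= eta * (ell i / u) by rewrite mulr_ge0 ?divr_ge0 // ltW.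
move=> j; have [->|nji] := eqVneq j i.
  rewrite wsu_step_drawn mulr_gt0 // subr_gt0.
  have rate_lt1 : eta * (ell i / u) < 1.
    have : eta * (ell i / u) <= eta * (1 / u) by rewrite ler_wpM2l // ler_pM2r ?invr_gt0.
    by move/le_lt_trans; apply; rewrite mul1r ltr_pdivrMr // mul1r.
  apply: le_lt_trans rate_lt1; rewrite ler_piMr // lerBlDr lerDl; exact: ltW.
by rewrite wsu_step_other // -/u mulr_gt0 // ltr_wpDr ?ltr01 // mulr_ge0 // ltW.
Qed.

End InteriorDist.

Lemma sum_tuple_cons (V : nmodType) (I : finType) n (G : seq I -> V) :
  \sum_(h : n.+1.-tuple I) G h = \sum_(i : I) \sum_(h : n.-tuple I) G (i :: h).
Proof.
rewrite pair_big /= (reindex (fun ih : I * n.-tuple I => [tuple of ih.1 :: ih.2])) /=.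
  by apply: eq_bigr => -[i h].
exists (fun h : n.+1.-tuple I => (thead h, [tuple of behead h])).
  by move=> [i h] _; congr pair; apply: val_inj.
by move=> [[|x s] //= sz] _; apply: val_inj.
Qed.

Section ExpectedPotential.
Variables (R : realType) (K : nat) (eta gam : R) (loss : nat -> 'I_K -> R).
Variables (inv : ('I_K -> R) -> Prop) (potential f : ('I_K -> R) -> R) (rate : nat -> R).
Hypothesis inv_step : forall t p i, inv p -> inv (wsu_step eta gam (loss t) p i).
Hypothesis tpi_ge0 : forall p i, inv p -> 0 <= tpi gam p i.
Hypothesis rate_ge0 : forall t, 0 <= rate t.
Hypothesis potential_step : forall t p, inv p ->
  \sum_i tpi gam p i * potential (wsu_step eta gam (loss t) p i) <= rate t * potential p.
Hypothesis f_le_potential : forall p, inv p -> f p <= potential p.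

Lemma expected_run_le n t p : inv p ->
  \sum_(h : n.-tuple 'I_K) wsu_prob eta gam loss t p h * f (wsu_run eta gam loss t p h)
  <= potential p * \prod_(k < n) rate (t + k).
Proof.
elim: n t p => [|n IHn] t p pI.
  rewrite big_ord0 mulr1 (big_pred1 [tuple]) => [|h]; last exact/esym/eqP/tuple0.
  by rewrite /= mul1r f_le_potential.
rewrite (@sum_tuple_cons _ _ _
  (fun h => wsu_prob eta gam loss t p h * f (wsu_run eta gam loss t p h))).
rewrite big_ord_recl addn0 /=.
have -> : \prod_(k < n) rate (t + bump 0 k) = \prod_(k < n) rate (t.+1 + k).
  by apply: eq_bigr => k _; rewrite /bump leq0n add1n addnS addSn.
apply: le_trans (_ : \sum_i tpi gam p i *
    (potential (wsu_step eta gam (loss t) p i) * \prod_(k < n) rate (t.+1 + k)) <= _).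
  apply: ler_sum => i _; under eq_bigr do rewrite -mulrA.
  by rewrite -mulr_sumr; apply: ler_wpM2l; [exact: tpi_ge0 | exact/IHn/inv_step].
under eq_bigr do rewrite mulrA.
rewrite -mulr_suml mulrA; apply: ler_wpM2r; first exact: prodr_ge0.
by rewrite mulrC; exact: potential_step.
Qed.

End ExpectedPotential.

Section OddsRatio.
Variable R : realType.

(* In both lemmas the drawn arm has mixed probability u and suffers unit loss, and
   (a, b) are the weights of the two arms.  The ratio in [gain_ratio_le] is the
   factor by which the odds of the other arm against the drawn one (of weight a)
   grow; the ratio in [loss_ratio_le] is the factor by which the odds of the drawn
   arm (of weight b) against the other one shrink. *)

Lemma scaled_step_le1 (u eta b : R) : 0 < u -> 2 * eta * b <= u ->
  2 * (eta * (1 / u)) * b <= 1.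
Proof.
move=> u_gt0 small; have -> : 2 * (eta * (1 / u)) * b = 2 * eta * b / u.
  by rewrite mul1r mulrA mulrAC.
by rewrite ler_pdivrMr // mul1r.
Qed.

Lemma gain_ratio_le (u eta a b : R) : 0 < u -> 0 <= eta -> a + b = 1 -> 2 * eta * b <= u ->
  u * ((1 + eta * (1 / u) * a) / (1 - eta * (1 / u) * b)) <= u + 2 * eta.
Proof.
move=> u_gt0 eta_ge0 ab small; have := scaled_step_le1 u_gt0 small.
have ud : u * (eta * (1 / u)) = eta by rewrite mulrCA mul1r mulfV ?gt_eqF ?mulr1.
set d := eta * (1 / u) in ud * => db.
have den_gt0 : 0 < 1 - d * b by lra.
rewrite mulrA ler_pdivrMr //.
have : 0 <= eta * (1 - 2 * d * b) by apply: mulr_ge0; rewrite // subr_ge0.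
nra.
Qed.

Lemma loss_ratio_le (u eta a b : R) : 0 < u -> 0 <= eta -> a + b = 1 -> 0 <= b ->
  2 * eta * b <= u ->
  u * ((1 - eta * (1 / u) * a) / (1 + eta * (1 / u) * b)) <= u - 2 * eta / 3.
Proof.
move=> u_gt0 eta_ge0 ab b_ge0 small; have := scaled_step_le1 u_gt0 small.
have ud : u * (eta * (1 / u)) = eta by rewrite mulrCA mul1r mulfV ?gt_eqF ?mulr1.
have d_ge0 : 0 <= eta * (1 / u) by rewrite mulr_ge0 // divr_ge0 // ltW.
set d := eta * (1 / u) in ud d_ge0 * => db.
have den_gt0 : 0 < 1 + d * b by have := mulr_ge0 d_ge0 b_ge0; lra.
rewrite mulrA ler_pdivrMr //.
have : 0 <= eta * (1 - 2 * d * b) by apply: mulr_ge0; rewrite // subr_ge0.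
nra.
Qed.

End OddsRatio.

Lemma big_ord2 (V : nmodType) (F : 'I_2 -> V) : \sum_(i < 2) F i = F ord0 + F arm2.
Proof. by rewrite big_ord_recl big_ord1; congr (_ + F _); apply: val_inj. Qed.

Section TwoArms.
Variables (R : realType) (eta gam : R).

Definition odds (p : 'I_2 -> R) : R := p arm2 / p ord0.

Lemma interior_dist2 (p : 'I_2 -> R) : interior_dist p ->
  [/\ 0 < p ord0, 0 < p arm2 & p ord0 + p arm2 = 1].
Proof. by move=> [p_gt0 p1]; rewrite -big_ord2 p1 !p_gt0. Qed.

Lemma le_odds (p : 'I_2 -> R) : interior_dist p -> p arm2 <= odds p.
Proof.
move=> /interior_dist2[p0_gt0 p2_gt0 p1].
by rewrite /odds ler_pdivlMr // ler_piMr ?ltW //; lra.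
Qed.

Lemma tpi2_ge (p : 'I_2 -> R) i : 0 < eta -> gam <= 1 -> 4 * eta <= gam ->
  interior_dist p -> 2 * eta <= tpi gam p i.
Proof.
move=> eta_gt0 gam_le1 eta_small [p_gt0 _].
have : gam / 2 <= tpi gam p i by apply: tpi_ge; [apply/andP; split; lra | exact: ltW].
lra.
Qed.

Lemma expected_odds_gain (ell p : 'I_2 -> R) :
  0 < eta -> gam <= 1 -> 4 * eta <= gam -> ell ord0 = 1 -> ell arm2 = 0 -> interior_dist p ->
  \sum_i tpi gam p i * odds (wsu_step eta gam ell p i) <= (1 + 2 * eta) * odds p.
Proof.
move=> eta_gt0 gam_le1 eta_small ell0 ell2 pI.
have [p0_gt0 p2_gt0 p1] := interior_dist2 pI.
have u0_ge := tpi2_ge ord0 eta_gt0 gam_le1 eta_small pI.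
have u1 : tpi gam p ord0 + tpi gam p arm2 = 1 by rewrite -big_ord2 sum_tpi //; case: pI.
rewrite big_ord2 /odds !(wsu_step_zero_loss eta gam p ell2) wsu_step_drawn.
rewrite wsu_step_other // ell0 -mulf_div -/(odds p).
move: (tpi gam p ord0) (tpi gam p arm2) u0_ge u1 => u0 u2 u0_ge u1.
have : u0 * ((1 + eta * (1 / u0) * p ord0) / (1 - eta * (1 / u0) * (1 - p ord0)))
    <= u0 + 2 * eta.
  by apply: gain_ratio_le; [lra | exact: ltW | ring | nra].
have z_gt0 : 0 < odds p by rewrite divr_gt0.
nra.
Qed.

Lemma expected_odds_loss (ell p : 'I_2 -> R) :
  0 < eta -> gam <= 1 -> 4 * eta <= gam -> ell ord0 = 0 -> ell arm2 = 1 -> interior_dist p ->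
  \sum_i tpi gam p i * odds (wsu_step eta gam ell p i) <= (1 - 2 * eta / 3) * odds p.
Proof.
move=> eta_gt0 gam_le1 eta_small ell0 ell2 pI.
have [p0_gt0 p2_gt0 p1] := interior_dist2 pI.
have u2_ge := tpi2_ge arm2 eta_gt0 gam_le1 eta_small pI.
have u1 : tpi gam p ord0 + tpi gam p arm2 = 1 by rewrite -big_ord2 sum_tpi //; case: pI.
rewrite big_ord2 /odds !(wsu_step_zero_loss eta gam p ell0) wsu_step_drawn.
rewrite wsu_step_other // ell2 -mulf_div -/(odds p).
move: (tpi gam p ord0) (tpi gam p arm2) u2_ge u1 => u0 u2 u2_ge u1.
have : u2 * ((1 - eta * (1 / u2) * (1 - p arm2)) / (1 + eta * (1 / u2) * p arm2))
    <= u2 - 2 * eta / 3.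
  by apply: loss_ratio_le; [lra | exact: ltW | ring | exact: ltW | nra].
have z_gt0 : 0 < odds p by rewrite divr_gt0.
nra.
Qed.

End TwoArms.

Lemma interior_dist_unif (R : realType) K : (0 < K)%N -> interior_dist (@unif R K).
Proof.
move=> K_gt0; split=> [j|]; first by rewrite /unif divr_gt0 ?ltr0n.
by rewrite /unif sumr_const card_ord -[LHS]mulr_natr mul1r mulVf // pnatr_eq0 -lt0n.
Qed.

Lemma odds_unif (R : realType) : odds (@unif R 2) = 1.
Proof. by rewrite /odds divff // /unif mul1r invr_eq0 pnatr_eq0. Qed.

Definition two_phase_rate (R : realType) (eta : R) (T k : nat) : R :=
  if (k <= T %/ 100)%N then 1 + 2 * eta else 1 - 2 * eta / 3.

Lemma two_phase_loss01 (R : realType) T k j : 0 <= two_phase_loss R T k j <= 1.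
Proof. by rewrite /two_phase_loss; do 2?case: ifP => _; rewrite ?lexx ?ler01. Qed.

Lemma expected_pi_two_phase_le (R : realType) (eta gam : R) T t :
  0 < eta -> gam <= 1 -> 4 * eta <= gam ->
  expected_pi eta gam (two_phase_loss R T) t arm2
  <= \prod_(k < t.-1) two_phase_rate eta T (1 + k).
Proof.
move=> eta_gt0 gam_le1 eta_small.
have inv_step k p i : interior_dist p ->
    interior_dist (wsu_step eta gam (two_phase_loss R T k) p i).
  apply: interior_wsu_step => [|||j]; rewrite ?two_phase_loss01 //; try lra.
have tpi_ge0 (p : 'I_2 -> R) i : interior_dist p -> 0 <= tpi gam p i.
  by move=> pI; have := tpi2_ge i eta_gt0 gam_le1 eta_small pI; lra.
have rate_ge0 k : 0 <= two_phase_rate eta T k.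
  by rewrite /two_phase_rate; case: ifP; lra.
have odds_step k (p : 'I_2 -> R) : interior_dist p ->
    \sum_i tpi gam p i * odds (wsu_step eta gam (two_phase_loss R T k) p i)
    <= two_phase_rate eta T k * odds p.
  move=> pI; rewrite /two_phase_rate /two_phase_loss; case: ifP => _.
    exact: expected_odds_gain.
  exact: expected_odds_loss.
apply: le_trans (expected_run_le inv_step tpi_ge0 rate_ge0 odds_step (@le_odds R) t.-1 1
  (@interior_dist_unif R 2 isT)) _.
by rewrite odds_unif mul1r.
Qed.

Lemma prod_two_phase_rate (R : realType) (eta : R) T m :
  \prod_(k < T %/ 100 + m) two_phase_rate eta T (1 + k)
  = (1 + 2 * eta) ^+ (T %/ 100) * (1 - 2 * eta / 3) ^+ m.
Proof.
rewrite big_split_ord /=; congr (_ * _).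
  rewrite (eq_bigr (fun=> 1 + 2 * eta)) ?prodr_const ?card_ord // => k _.
  by rewrite /two_phase_rate ifT //=; have := ltn_ord k; lia.
rewrite (eq_bigr (fun=> 1 - 2 * eta / 3)) ?prodr_const ?card_ord // => k _.
by rewrite /two_phase_rate ifF //=; lia.
Qed.

Lemma exprn_le_expR (R : realType) (x : R) n : -1 <= x -> (1 + x) ^+ n <= expR (n%:R * x).
Proof.
move=> x_ge; rewrite expRM_natl lerXn2r ?nnegrE ?expR_ge0 ?expR_ge1Dx //; lra.
Qed.

Lemma two_phase_product_le (R : realType) (eta : R) n m :
  0 <= eta <= 3 / 2 -> (30 * n <= m)%N -> 1 / 5 <= eta * n%:R ->
  (1 + 2 * eta) ^+ n * (1 - 2 * eta / 3) ^+ m <= 1 / 4.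
Proof.
move=> /andP[eta_ge0 eta_le] mn etan.
have gain := exprn_le_expR n (_ : -1 <= 2 * eta).
have decay := exprn_le_expR m (_ : -1 <= - (2 * eta / 3)).
rewrite -[1 - _]/(1 + - (2 * eta / 3)).
apply: le_trans (ler_pM _ _ (gain _) (decay _)) _; rewrite ?exprn_ge0 //; try lra.
have m_ge : 30 * (eta * n%:R) <= eta * m%:R.
  by rewrite mulrCA -natrM ler_wpM2l // ler_nat.
rewrite -expRD; apply: le_trans (_ : expR (- (18 / 5)) <= _).
  by rewrite ler_expR; lra.
rewrite expRN div1r lef_pV2 ?posrE ?expR_gt0 //; apply: le_trans (expR_ge1Dx _); lra.
Qed.

Lemma regime_eta_mul_ge (R : realType) (T eta : R) :
  8000 <= T -> T `^ (- (2 / 3)) <= eta -> 20 <= eta * T.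
Proof.
move=> T_ge eta_ge; have T_gt0 : 0 < T by lra.
have cube : (T `^ (1 / 3)) ^+ 3 = T.
  rewrite -powR_mulrn ?powR_ge0 // -powRrM.
  have -> : 1 / 3 * 3%:R = 1 :> R by field.
  by rewrite powRr1 // ltW.
have root_ge : 20 <= T `^ (1 / 3).
  by rewrite -(ler_pXn2r (isT : (0 < 3)%N)) ?nnegrE ?powR_ge0 // cube; lra.
apply: le_trans root_ge _.
have -> : T `^ (1 / 3) = T `^ (- (2 / 3)) * T.
  rewrite -{3}(powRr1 (ltW T_gt0)) -powRD; last by apply/implyP => _; rewrite gt_eqF.
  by congr (_ `^ _); field.
by apply: ler_wpM2r => //; exact: ltW.
Qed.

Theorem mainTheorem20 (R : realType) (eta gam : nat -> R) :
  (forall T : nat, (0 < T)%N -> (100 %| T)%N ->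
     valid_params 2 (eta T) (gam T) /\ nontrivial_regime T (eta T) (gam T)) ->
  exists T0 : nat, forall T : nat, (T0 <= T)%N -> (0 < T)%N -> (100 %| T)%N ->
    forall t : nat, (T %/ 100 + T %/ 5 + T %/ 10 < t)%N -> (t <= T)%N ->
      expected_pi (eta T) (gam T) (two_phase_loss R T) t arm2 <= 1 / 4.
Proof.
move=> params; exists 8000%N => T T_ge T_gt0 T_div t t_gt _.
have [[/andP[eta_gt0 _] [/andP[gam_gt0 gam_lt] ratio]] [eta_ge _]] := params T T_gt0 T_div.
have eta_small : 4 * eta T <= gam T by move: ratio; rewrite ler_pdivrMr //; lra.
have etaT : 20 <= eta T * T%:R by apply: regime_eta_mul_ge; rewrite // ler_nat.
apply: le_trans (expected_pi_two_phase_le T t eta_gt0 _ eta_small) _; first lra.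
have -> : t.-1 = (T %/ 100 + (t.-1 - T %/ 100))%N by lia.
rewrite prod_two_phase_rate; apply: two_phase_product_le; first by apply/andP; split; lra.
  by lia.
have T1 : T%:R = (T %/ 100)%:R * 100 :> R by rewrite -natrM divnK.
by move: etaT; rewrite T1; lra.
Qed.
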